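(* Let $L\ge3$ be odd and let $\mathcal{C}$ be an equi-difference code in $\mathsf{CAC}(L,3)$ with leave $\Lambda$. If $|\Lambda|<4$ and $\{L/3,2L/3\}\not\subseteq\Lambda$, then $\mathcal{C}$ is optimal; moreover $|\mathcal{C}|=M^e(L,3)=M(L,3)$.
   Context: $\mathcal{P}(L,\omega)$ is the set of $\omega$-element subsets of $\mathbb{Z}_L$. For $\mathcal{I}\in\mathcal{P}(L,\omega)$: $d(\mathcal{I})=\{a-b \bmod L: a,b\in\mathcal{I}\}$, $d^*(\mathcal{I})=d(\mathcal{I})\setminus\{0\}$. A conflict-avoiding code (CAC) of length $L$ and weight $\omega$ is a set $\mathcal{C}\subseteq\mathcal{P}(L,\omega)$ with $d^*(\mathcal{I})\cap d^*(\mathcal{J})=\emptyset$ for all distinct $\mathcal{I},\mathcal{J}\in\mathcal{C}$; $\mathsf{CAC}(L,\omega)$ is the class of these codes, $M(L,\omega)$ their maximum size, and a code of size $M(L,\omega)$ is optimal. A codeword is equi-difference if it equals $\{0,g,2g,\dots,(\omega-1)g\}$ (mod $L$) for some $g$; a code is equi-difference if all its codewords are; $M^e(L,\omega)$ is the maximum size of an equi-difference code in $\mathsf{CAC}(L,\omega)$. The leave of $\mathcal{C}$ is $\Lambda=\mathbb{Z}_L\setminus\bigcup_{\mathcal{I}\in\mathcal{C}}d(\mathcal{I})$. (When $3\nmid L$ the condition $\{L/3,2L/3\}\not\subseteq\Lambda$ is vacuous.) *)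

(* Z_L is represented by 'I_L (residues 0..L-1). *)
From mathcomp Require Import all_boot.
Set Implicit Arguments. Unset Strict Implicit. Unset Printing Implicit Defensive.

Definition zdiff (L : nat) (a b : 'I_L) : nat := (a + (L - b)) %% L.

Definition dset (L : nat) (I : {set 'I_L}) : {set 'I_L} :=
  [set x : 'I_L | [exists a in I, exists b in I, nat_of_ord x == zdiff a b]].

Definition dstar (L : nat) (I : {set 'I_L}) : {set 'I_L} :=
  dset I :\: [set x : 'I_L | nat_of_ord x == 0].

Definition is_CAC (L w : nat) (C : {set {set 'I_L}}) : bool :=
  [forall I in C, #|I| == w] &&
  [forall I in C, forall J in C, (I != J) ==> [disjoint dstar I & dstar J]].

Definition equidiff_word (L w : nat) (I : {set 'I_L}) : bool :=
  [exists g : 'I_L,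
     I == [set x : 'I_L | [exists i : 'I_w, nat_of_ord x == (i * g) %% L]]].

Definition equidiff_code (L w : nat) (C : {set {set 'I_L}}) : bool :=
  [forall I in C, equidiff_word w I].

Definition M (L w : nat) : nat :=
  \max_(C : {set {set 'I_L}} | is_CAC w C) #|C|.
Definition Me (L w : nat) : nat :=
  \max_(C : {set {set 'I_L}} | is_CAC w C && equidiff_code w C) #|C|.

Definition optimal (L w : nat) (C : {set {set 'I_L}}) : Prop :=
  is_CAC w C /\ #|C| = M L w.

Definition leave (L : nat) (C : {set {set 'I_L}}) : {set 'I_L} :=
  ~: \bigcup_(I in C) dset I.

From mathcomp Require Import all_boot all_algebra.
From mathcomp Require Import zify.
Set Implicit Arguments. Unset Strict Implicit. Unset Printing Implicit Defensive.
Import GRing.Theory.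

(* Since L is odd, Z_L has no 2-torsion; let T be its set of elements of order 3
   (T = {L/3, 2L/3} if 3 | L, and T is empty otherwise).  For a 3-set I, d*(I)
   contains four distinct elements +-u, +-v unless d*(I) = {u, -u} with u in T,
   so 4 <= |d*(I)| + |d*(I) :&: T|; summing over the disjoint d*(I) of any CAC C'
   gives 4|C'| + 1 <= L + |T|.  Dually, for an equi-difference word {0, g, 2g},
   d*(I) lies in {+-g, +-2g}, which collapses to {+-g} as soon as it meets T,
   so |d*(I)| + |d*(I) :&: T| <= 4.  The hypothesis on the leave forces T to be
   covered by the code C, whence L <= |leave C| + 1 + 4|C| - |T| and finally
   4|C'| <= 4|C| + 3. *)

Lemma card_le_size (T : finType) (A : {pred T}) (s : seq T) :
  {subset A <= s} -> #|A| <= size s.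
Proof. by move=> sA; apply: leq_trans (card_size s); apply/subset_leq_card/subsetP. Qed.

Lemma size_le_card (T : finType) (A : {pred T}) (s : seq T) :
  uniq s -> {subset s <= A} -> size s <= #|A|.
Proof. by move=> /card_uniqP <- sA; apply/subset_leq_card/subsetP. Qed.

Lemma card_bigcup_disjoint (T U : finType) (C : {set U}) (f : U -> {set T}) :
  {in C &, forall I J, I != J -> [disjoint f I & f J]} ->
  #|\bigcup_(I in C) f I| = \sum_(I in C) #|f I|.
Proof.
elim: {C}_.+1 {-2}C (ltnSn #|C|) => // n IH C ltCn disjC.
have [-> | [I0 I0C]] := set_0Vmem C; first by rewrite big_set0 big_set0 cards0.
rewrite (big_setD1 I0 I0C) (big_setD1 I0 I0C) /= -IH; last 2 first.
- by move: ltCn; rewrite (cardsD1 I0 C) I0C.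
- by move=> I J /setD1P[_ IC] /setD1P[_ JC]; apply: disjC.
apply/eqP; rewrite (leq_card_setU _ _).2; apply/bigcup_disjointP => I /setD1P[II0 IC].
by apply: disjC; rewrite // eq_sym.
Qed.

Lemma mul3_mod_eq0 L n : n < L ->
  (n != 0) && (n * 3 %% L == 0) = (3 %| L) && ((n == L %/ 3) || (n == 2 * (L %/ 3))).
Proof.
move=> nL; apply/idP/idP.
  case/andP=> n0; rewrite -/(dvdn _ _) => /dvdnP [q Hq].
  have q3 : q < 3.
    by rewrite -(ltn_pmul2r (leq_ltn_trans (leq0n n) nL)) -Hq mulnC ltn_pmul2l.
  move: q3 Hq n0; case: q => [|[|[|q]]] //= Hq n0; lia.
case/andP => /dvdnP [k E]; rewrite E mulnK // in nL *.
case/orP => /eqP E2; rewrite E2 in nL *; apply/andP; split; try lia.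
  by rewrite modnn.
by rewrite -mulnA modnMl.
Qed.

Lemma bigmax_attained (I : finType) (P : pred I) (F : I -> nat) i0 :
  P i0 -> (forall i, P i -> F i <= F i0) -> \max_(i | P i) F i = F i0.
Proof.
by move=> Pi0 le; apply/eqP; rewrite eqn_leq leq_bigmax_cond // andbT; apply/bigmax_leqP.
Qed.

Local Open Scope ring_scope.

Section DifferenceSets.
Variable V : finZmodType.
Implicit Types (I : {set V}) (C : {set {set V}}) (x y g : V).

Definition diffs I : {set V} := [set a - b | a in I, b in I].
Definition ndiffs I : {set V} := diffs I :\ 0.
Definition order3 : {set V} := [set x | x != 0 & x *+ 3 == 0].
Definition equidiff3 g : {set V} := [set 0; g; g *+ 2].

Lemma mem_ndiffs I a b : a \in I -> b \in I -> a != b -> a - b \in ndiffs I.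
Proof. by move=> aI bI ab; rewrite /ndiffs !inE subr_eq0 ab; apply: imset2_f. Qed.

Lemma ndiffsN I x : x \in ndiffs I -> - x \in ndiffs I.
Proof.
rewrite /ndiffs !inE oppr_eq0 => /andP[-> /imset2P[a b aI bI ->]].
by rewrite opprB; apply: imset2_f.
Qed.

Lemma card_leave_le C :
  (#|V| <= #|~: \bigcup_(I in C) diffs I| + #|\bigcup_(I in C) ndiffs I| + 1)%N.
Proof.
rewrite -(cardsC (\bigcup_(I in C) diffs I)) addnC -addnA leq_add2l.
apply: (@leq_trans #|0 |: \bigcup_(I in C) ndiffs I|).
  apply/subset_leq_card/subsetP => x /bigcupP[I IC xI]; rewrite !inE.
  by have [//|x0] := eqVneq x 0; apply/bigcupP; exists I; rewrite // !inE x0.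
by rewrite cardsU1 addnC leq_add2l leq_b1.
Qed.

Hypothesis two_torsion_free : forall x, x *+ 2 = 0 -> x = 0.

Lemma oppr_neq x : x != 0 -> (- x == x) = false.
Proof.
move=> x0; apply/negbTE; apply: contra x0.
by rewrite eq_sym -addr_eq0 -mulr2n => /eqP/two_torsion_free->.
Qed.

Lemma uniq_pm x : x != 0 -> uniq [:: x; - x].
Proof. by move=> x0; rewrite /= inE eq_sym oppr_neq. Qed.

Lemma uniq_pm2 x y : x != 0 -> y != 0 -> y != x -> y != - x ->
  uniq [:: x; - x; y; - y].
Proof.
move=> x0 y0 yx ynx; rewrite /= !inE !negb_or eq_sym oppr_neq // eqr_opp.
by rewrite (eq_sym x) -eqr_oppLR (eq_sym (- x)) yx ynx (eq_sym y) oppr_neq.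
Qed.

Lemma card_ndiffs3_ge I : #|I| = 3%N ->
  (4 <= #|ndiffs I| + #|ndiffs I :&: order3|)%N.
Proof.
move=> I3.
have /card_gt2P[a [b [c [[aI bI cI] [ab bc ca]]]]] : (2 < #|I|)%N by rewrite I3.
set u := b - a; set v := c - a.
have u0 : u != 0 by rewrite subr_eq0 eq_sym.
have Du : u \in ndiffs I by apply: mem_ndiffs; rewrite // eq_sym.
have Dv : v \in ndiffs I by apply: mem_ndiffs.
have [vu | vu] := eqVneq v (- u); last first.
  apply: leq_trans (leq_addr _ _); apply: (size_le_card (uniq_pm2 _ _ _ vu)) => //.
  - by rewrite subr_eq0.
  - by apply: contraNneq bc => /addIr->.
  by apply/allP; rewrite /= Du Dv (ndiffsN Du) (ndiffsN Dv).
have u2 : b - c = u *+ 2 by rewrite mulr2n -{2}(opprK u) -vu /u /v opprB addrA subrK.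
have D2u : u *+ 2 \in ndiffs I by rewrite -u2; apply: mem_ndiffs.
have [u3 | u3] := eqVneq (u *+ 3) 0.
  have Tu : u \in order3 by rewrite inE u0 u3 eqxx.
  have Tnu : - u \in order3 by rewrite inE oppr_eq0 u0 mulNrn u3 oppr0 eqxx.
  rewrite -[4%N]/(2 + 2)%N; apply: leq_add; apply: (size_le_card (uniq_pm u0));
    by apply/allP; rewrite /= ?in_setI Du (ndiffsN Du) ?Tu ?Tnu.
apply: leq_trans (leq_addr _ _); apply: (size_le_card (uniq_pm2 (y := u *+ 2) u0 _ _ _)).
- by apply/eqP => /two_torsion_free/eqP; apply/negP.
- by rewrite mulr2n -subr_eq0 addrK.
- by rewrite mulr2n -addr_eq0 -mulr2n -mulrSr.
by apply/allP; rewrite /= Du D2u (ndiffsN Du) (ndiffsN D2u).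
Qed.

Lemma card_ndiffs_equidiff_le g :
  (#|ndiffs (equidiff3 g)| + #|ndiffs (equidiff3 g) :&: order3| <= 4)%N.
Proof.
set D := ndiffs _.
have sD : {subset D <= [:: g; - g; g *+ 2; - (g *+ 2)]}.
  move=> x; rewrite !inE => /andP[x0 /imset2P[a b]].
  rewrite !inE -!orbA => /or3P[]/eqP-> /or3P[]/eqP-> xE; move: x0; rewrite xE;
  by rewrite ?mulr2n ?(subr0, sub0r, subrr, addrK, opprD, addrA) ?eqxx ?orbT.
have [DT0 | [t DTt]] := set_0Vmem (D :&: order3).
  by rewrite DT0 cards0 addn0 (card_le_size sD).
move: DTt; rewrite in_setI => /andP[/sD tD]; rewrite inE => /andP[_ /eqP t3].
have g3 : g *+ 3 = 0.
  move: tD t3; rewrite !inE => /or4P[]/eqP->; rewrite ?mulNrn -?mulrnA.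
  - by [].
  - by move/eqP; rewrite oppr_eq0 => /eqP.
  - by rewrite mulnC mulrnA => /two_torsion_free.
  - by move/eqP; rewrite oppr_eq0 mulnC mulrnA => /eqP/two_torsion_free.
have g2 : g *+ 2 = - g by apply/eqP; rewrite -addr_eq0 -mulrSr g3.
have sD2 : {subset D <= [:: g; - g]}.
  by move=> x /sD; rewrite g2 opprK !inE => /or4P[] ->; rewrite ?orbT.
have := card_le_size sD2; have := subset_leq_card (subsetIl D order3); rewrite /=; lia.
Qed.

Section Codes.
Variable C : {set {set V}}.
Hypothesis C_disjoint :
  {in C &, forall I J, I != J -> [disjoint ndiffs I & ndiffs J]}.

Lemma card_cover_ndiffs :
  (#|\bigcup_(I in C) ndiffs I| + #|(\bigcup_(I in C) ndiffs I) :&: order3|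
    = \sum_(I in C) (#|ndiffs I| + #|ndiffs I :&: order3|))%N.
Proof.
have -> : (\bigcup_(I in C) ndiffs I) :&: order3 = \bigcup_(I in C) (ndiffs I :&: order3).
  apply/setP => x; rewrite inE; apply/andP/bigcupP => [[/bigcupP[I IC xI] xT]|[I IC]].
    by exists I; rewrite // inE xI.
  by rewrite inE => /andP[xI ->]; split=> //; apply/bigcupP; exists I.
rewrite big_split /= !card_bigcup_disjoint // => I J IC JC IJ.
exact: disjointW (subsetIl _ _) (subsetIl _ _) (C_disjoint IC JC IJ).
Qed.

Lemma card_cac3_le : {in C, forall I, #|I| = 3%N} ->
  (4 * #|C| + 1 <= #|V| + #|order3|)%N.
Proof.
move=> C3.
have : (\sum_(I in C) 4 <= \sum_(I in C) (#|ndiffs I| + #|ndiffs I :&: order3|))%N.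
  by apply: leq_sum => I /C3/card_ndiffs3_ge.
rewrite sum_nat_const -card_cover_ndiffs.
have : (#|\bigcup_(I in C) ndiffs I| <= #|V|.-1)%N.
  rewrite -(cardsC1 0); apply/subset_leq_card/bigcupsP => I _.
  by apply/subsetP => x; rewrite !inE => /andP[].
have := subset_leq_card (subsetIr (\bigcup_(I in C) ndiffs I) order3).
have : (0 < #|V|)%N by apply/card_gt0P; exists 0.
lia.
Qed.

Lemma card_equidiff_code_le : {in C, forall I, exists g, I = equidiff3 g} ->
  (#|\bigcup_(I in C) ndiffs I| + #|(\bigcup_(I in C) ndiffs I) :&: order3|
    <= 4 * #|C|)%N.
Proof.
move=> eqC; rewrite card_cover_ndiffs mulnC -sum_nat_const.
by apply: leq_sum => I /eqC[g ->]; apply: card_ndiffs_equidiff_le.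
Qed.

End Codes.
End DifferenceSets.

Arguments order3 {V}.

Section CyclicGroup.
Variable p : nat.
Local Notation L := p.+2.
Implicit Types (I : {set 'I_L}) (C : {set {set 'I_L}}).

Lemma dsetE I : dset I = diffs I.
Proof.
apply/setP => x; rewrite inE; apply/existsP/imset2P => [[a /andP[aI]]|[a b aI bI ->]].
  case/existsP => b /andP[bI /eqP xE]; exists a b => //.
  by apply: val_inj; rewrite /= xE /zdiff modnDmr.
by exists a; rewrite aI; apply/existsP; exists b; rewrite bI /zdiff /= modnDmr.
Qed.

Lemma dstarE I : dstar I = ndiffs I.
Proof. by apply/setP => x; rewrite /dstar /ndiffs dsetE !inE. Qed.

Lemma leaveE C : leave C = ~: \bigcup_(I in C) diffs I.
Proof. by rewrite /leave; under eq_bigr do rewrite dsetE. Qed.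

Lemma is_CAC_card w C : is_CAC w C -> {in C, forall I, #|I| = w}.
Proof. by case/andP => /forall_inP Cw _ I /Cw/eqP. Qed.

Lemma is_CAC_disjoint w C : is_CAC w C ->
  {in C &, forall I J, I != J -> [disjoint ndiffs I & ndiffs J]}.
Proof.
case/andP => _ /forall_inP disjC I J IC JC IJ.
by move/forall_inP: (disjC I IC) => /(_ J JC); rewrite IJ !dstarE.
Qed.

Lemma equidiff_wordP I : equidiff_word 3 I -> exists g, I = equidiff3 g.
Proof.
case/existsP => g /eqP->; exists g; apply/setP => x; rewrite !inE -!orbA.
apply/existsP/or3P => [[[[|[|[|i]]] //= _ /eqP xE]]|].
- by constructor 1; apply/eqP/val_inj; rewrite /= xE.
- by constructor 2; apply/eqP/val_inj; rewrite /= xE mul1n modn_small.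
- by constructor 3; apply/eqP/val_inj; rewrite Zp_mulrn /= xE mulnC.
case=> /eqP->.
- by exists ord0; rewrite /= mul0n mod0n.
- by exists (@Ordinal 3 1 isT); rewrite /= mul1n modn_small.
- by exists (@Ordinal 3 2 isT); rewrite Zp_mulrn /= mulnC.
Qed.

Lemma equidiff_codeP C :
  equidiff_code 3 C -> {in C, forall I, exists g, I = equidiff3 g}.
Proof. by move/forall_inP=> eqC I /eqC/equidiff_wordP. Qed.

Lemma mem_order3 (x : 'I_L) : (x \in order3) =
  (3 %| L)%N && ((val x == L %/ 3) || (val x == 2 * (L %/ 3)))%N.
Proof.
by rewrite inE -val_eqE -[x *+ 3 == 0]val_eqE Zp_mulrn /=; apply: mul3_mod_eq0.
Qed.

Hypothesis oddL : odd L.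

Lemma Zp_two_torsion_free (x : 'I_L) : x *+ 2 = 0 -> x = 0.
Proof.
move/(congr1 val); rewrite Zp_mulrn /= => /eqP; rewrite -/(dvdn _ _).
by rewrite Gauss_dvdl ?coprimen2 // /dvdn modn_small // => /eqP x0; apply: val_inj.
Qed.

Lemma order3_pm (t : 'I_L) : t \in order3 -> order3 = [set t; - t].
Proof.
move=> Tt.
have sT : {subset (order3 : {set 'I_L}) <= [:: inord (L %/ 3); inord (2 * (L %/ 3))]}.
  move=> x; rewrite mem_order3 !inE => /andP[_ /orP[]/eqP <-];
  by rewrite inord_val eqxx ?orbT.
apply/esym/eqP; rewrite eqEcard (leq_trans (card_le_size sT)) ?andbT; last first.
  by rewrite cards2 eq_sym oppr_neq //; [apply: Zp_two_torsion_free | case/setIdP: Tt].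
move: Tt; rewrite inE => /andP[t0 t3].
apply/subsetP => x; rewrite !inE => /orP[]/eqP->.
  by rewrite t0 t3.
by rewrite oppr_eq0 mulNrn oppr_eq0 t0 t3.
Qed.

Lemma order3_sub_cover C :
  ~ (3 %| L /\ [set x : 'I_L | (val x == L %/ 3) || (val x == 2 * (L %/ 3))]
       \subset leave C)%N ->
  order3 \subset \bigcup_(I in C) ndiffs I.
Proof.
move=> notsub.
have [-> | [t Tt]] := set_0Vmem (order3 : {set 'I_L}); first exact: sub0set.
have [s Ts sC] : exists2 s, s \in order3 & s \notin leave C.
  apply/subsetPn/negP => sub; apply: notsub; move: Tt; rewrite mem_order3 => /andP[L3 _].
  by split=> //; apply: subset_trans sub; apply/subsetP => x; rewrite inE mem_order3 L3.
have /bigcupP[I IC sI] : s \in \bigcup_(I in C) ndiffs I.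
  move: sC; rewrite leaveE inE negbK => /bigcupP[I IC sI]; apply/bigcupP; exists I => //.
  by move: Ts; rewrite !inE sI andbT => /andP[].
rewrite (order3_pm Ts); apply/subsetP => x; rewrite !inE => /orP[]/eqP->;
  by apply/bigcupP; exists I; rewrite // ndiffsN.
Qed.

Lemma equidiff_code_max C C' :
  is_CAC 3 C -> equidiff_code 3 C -> (#|leave C| < 4)%N ->
  ~ (3 %| L /\ [set x : 'I_L | (val x == L %/ 3) || (val x == 2 * (L %/ 3))]
       \subset leave C)%N ->
  is_CAC 3 C' -> (#|C'| <= #|C|)%N.
Proof.
move=> cacC eqC leaveC notsub cacC'.
(* The ascriptions fix one finType instance on 'I_L, so that lia sees equal atoms. *)
pose T : {set 'I_L} := order3; pose S : {set 'I_L} := \bigcup_(I in C) ndiffs I.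
have codeC' : (4 * #|C'| + 1 <= L + #|T|)%N.
  have := card_cac3_le Zp_two_torsion_free (is_CAC_disjoint cacC') (is_CAC_card cacC').
  by rewrite card_ord.
have codeC : (#|S| + #|T| <= 4 * #|C|)%N.
  have /setIidPr <- : T \subset S := order3_sub_cover notsub.
  exact: (card_equidiff_code_le Zp_two_torsion_free (is_CAC_disjoint cacC)
                                (equidiff_codeP eqC)).
have leaveS : (L <= #|leave C| + #|S| + 1)%N.
  by have := card_leave_le C; rewrite -leaveE card_ord.
lia.
Qed.

End CyclicGroup.

Local Close Scope ring_scope.

Theorem mainTheorem11 (L : nat) (C : {set {set 'I_L}}) :
  3 <= L -> odd L ->
  is_CAC 3 C -> equidiff_code 3 C ->
  #|leave C| < 4 ->
  ~ (3 %| L /\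
     [set x : 'I_L | (nat_of_ord x == L %/ 3) || (nat_of_ord x == 2 * (L %/ 3))]
       \subset leave C) ->
  optimal 3 C /\ #|C| = Me L 3 /\ #|C| = M L 3.
Proof.
case: L C => [|[|[|n]]] C // _ oddL cacC eqC leaveC notsub.
have maxC := equidiff_code_max oddL cacC eqC leaveC notsub.
have eqM : #|C| = M n.+3 3 by apply/esym/bigmax_attained.
have eqMe : #|C| = Me n.+3 3.
  by apply/esym/bigmax_attained => [|C' /andP[/maxC]]; rewrite ?cacC.
by [].
Qed.
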